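(* Suppose that for every $i\in\mathcal N$ and every $Z\in\mathcal X$, the function $c\mapsto U_i(Z+c)$ on $\mathbb R$ is continuous, strictly increasing, and satisfies $\lim_{c\to\infty}U_i(Z+c)=\infty$, and that each $U_i$ is monotone and concave. Then $\mathcal{CPO}=\bigcup_{\lambda\in\Lambda}\mathcal{CS}_\lambda$.
   Context: Let $(\Omega,\mathcal F,\mathbb P)$ be an atomless probability space and $\mathcal X:=L^\infty(\Omega,\mathcal F,\mathbb P)$. There are $n\in\mathbb N$ agents indexed by $\mathcal N=\{1,\dots,n\}$ (with $n\ge 2$), agent $i$ having initial endowment $X_i\in\mathcal X$; the aggregate endowment is $S:=\sum_{i=1}^n X_i$. The set of allocations is $\mathcal A:=\{(Y_1,\dots,Y_n)\in\mathcal X^n:\sum_{i=1}^nY_i=S\}$. Each agent $i$ has a utility functional $U_i:\mathcal X\to\mathbb R$. An allocation $(Y_i)\in\mathcal A$ is individually rational (IR) if $U_i(Y_i)\ge U_i(X_i)$ for all $i$; $\mathcal{IR}$ denotes the set of IR allocations. A random vector $(Z_1,\dots,Z_n)$ is comonotone if $(Z_i(\omega_1)-Z_i(\omega_2))(Z_j(\omega_1)-Z_j(\omega_2))\ge0$ for all $\omega_1,\omega_2\in\Omega$ and all $i,j$. $\mathcal A_C$ denotes the set of comonotone allocations in $\mathcal A$. An allocation $(Y_i^* )\in\mathcal A_C$ is comonotone Pareto optimal (CPO) if it is IR and there is no other IR allocation $(Y_i)\in\mathcal A_C$ with $U_i(Y_i)\ge U_i(Y_i^* )$ for all $i$ and at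 least one strict inequality; $\mathcal{CPO}$ denotes the set of CPO allocations. $U$ is monotone if $Z_1\le Z_2$ implies $U(Z_1)\le U(Z_2)$. Let $\Lambda:=\mathbb R_+^n\setminus\{0\}$, and for $\lambda\in\Lambda$ let $\mathcal{CS}_\lambda$ be the set of maximizers (possibly empty) of $\sup_{(Y_i)\in\mathcal{IR}\cap\mathcal A_C}\sum_{i=1}^n\lambda_iU_i(Y_i)$. *)

From HB Require Import structures.
From mathcomp Require Import all_boot all_order all_algebra.
From mathcomp Require Import all_classical all_reals all_analysis.
Set Implicit Arguments. Unset Strict Implicit. Unset Printing Implicit Defensive.
Import Order.TTheory GRing.Theory Num.Theory.
Import numFieldNormedType.Exports.
Local Open Scope classical_set_scope.
Local Open Scope ring_scope.

Section Defs.
Context {R : realType} {d : measure_display} {T : measurableType d}.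

Definition atomless (P : probability T R) : Prop :=
  forall A : set T, measurable A -> (0 < P A)%E ->
    exists B : set T, [/\ measurable B, B `<=` A, (0 < P B)%E & (P B < P A)%E].

(* the space X = L^infty, represented by bounded measurable random variables *)
Definition inX (Z : T -> R) : Prop :=
  measurable_fun setT Z /\ exists M : R, forall w, `|Z w| <= M.

Context {n : nat}.

Definition allocation (E Y : 'I_n -> T -> R) : Prop :=
  (forall i, inX (Y i)) /\ forall w, \sum_(i < n) Y i w = \sum_(i < n) E i w.

Definition comonotone (Y : 'I_n -> T -> R) : Prop :=
  forall (w1 w2 : T) (i j : 'I_n),
    0 <= (Y i w1 - Y i w2) * (Y j w1 - Y j w2).

Definition comon_allocation (E Y : 'I_n -> T -> R) : Prop :=
  allocation E Y /\ comonotone Y.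

Definition indiv_rational (U : 'I_n -> (T -> R) -> R) (E Y : 'I_n -> T -> R)
  : Prop := allocation E Y /\ forall i, U i (E i) <= U i (Y i).

Definition CPO (U : 'I_n -> (T -> R) -> R) (E Y : 'I_n -> T -> R) : Prop :=
  [/\ comon_allocation E Y, indiv_rational U E Y &
      ~ exists Y' : 'I_n -> T -> R,
          [/\ indiv_rational U E Y', comon_allocation E Y',
              forall i, U i (Y i) <= U i (Y' i) &
              exists i, U i (Y i) < U i (Y' i)]].

Definition in_Lambda (lam : 'I_n -> R) : Prop :=
  (forall i, 0 <= lam i) /\ exists i, lam i != 0.

Definition CS (U : 'I_n -> (T -> R) -> R) (E : 'I_n -> T -> R)
  (lam : 'I_n -> R) (Y : 'I_n -> T -> R) : Prop :=
  [/\ indiv_rational U E Y, comon_allocation E Y &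
      forall Y', indiv_rational U E Y' -> comon_allocation E Y' ->
        \sum_(i < n) lam i * U i (Y' i) <= \sum_(i < n) lam i * U i (Y i)].

End Defs.

Definition monotoneU {R : realType} {d} {T : measurableType d}
  (V : (T -> R) -> R) : Prop :=
  forall Z1 Z2, inX Z1 -> inX Z2 -> (forall w, Z1 w <= Z2 w) -> V Z1 <= V Z2.

Definition concaveU {R : realType} {d} {T : measurableType d}
  (V : (T -> R) -> R) : Prop :=
  forall Z1 Z2 (t : R), inX Z1 -> inX Z2 -> 0 <= t <= 1 ->
    t * V Z1 + (1 - t) * V Z2 <= V (fun w => t * Z1 w + (1 - t) * Z2 w).

Definition cash_regular {R : realType} {d} {T : measurableType d}
  (V : (T -> R) -> R) : Prop :=
  forall Z, inX Z ->
    [/\ continuous (fun c : R => V (fun w => Z w + c)),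
        (forall c1 c2 : R, c1 < c2 -> V (fun w => Z w + c1) < V (fun w => Z w + c2)) &
        (fun c : R => V (fun w => Z w + c)) @ +oo --> +oo].

(* If Y maximizes the lam-weighted welfare over the IR comonotone allocations
   and Y' Pareto-dominates it, then either an agent with positive weight gains
   strictly, contradicting maximality, or a strictly improved agent j has weight
   zero.  In the latter case, by continuity in cash, j can hand a small amount of
   cash to an agent k of positive weight and remain individually rational, and k
   gains strictly since utilities are strictly increasing in cash; cash transfers
   preserve comonotonicity.

   Conversely, let Y be CPO.  The positive multiples of the utility gains
   U_i(Y'_i) - U_i(Y_i) of IR comonotone allocations Y', and everything below
   them, form a convex cone: mixtures of comonotone allocations of the same
   aggregate stay comonotone (every increment has the sign of the increment of
   the aggregate), and by concavity a mixture gains at least the mixture of the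
   gains.  Pareto optimality says the cone misses the open positive orthant.  Its
   gauge p(x) = inf {s | x - s(1,...,1) lies in the cone} is sublinear, and a
   finite-dimensional Hahn-Banach argument gives a linear form below p; its
   coefficients are the nonnegative, nonzero weights lam, and lam . z <= 0 on the
   cone says exactly that Y maximizes the lam-weighted welfare. *)

From HB Require Import structures.
From mathcomp Require Import all_boot all_order all_algebra.
From mathcomp Require Import all_classical all_reals all_analysis.
From mathcomp Require Import ring lra measurable_realfun.
Set Implicit Arguments. Unset Strict Implicit. Unset Printing Implicit Defensive.
Import Order.TTheory GRing.Theory Num.Theory.
Import numFieldNormedType.Exports.
Local Open Scope classical_set_scope.
Local Open Scope ring_scope.

Section Sublinear.
Variables (R : realType) (V : lmodType R) (p : V -> R).
Hypothesis p_subadd : forall x y, p (x + y) <= p x + p y.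
Hypothesis p_homo : forall t x, 0 < t -> t * p x <= p (t *: x).

Lemma sublinear_ge0 : 0 <= p 0.
Proof. by have := p_subadd 0 0; rewrite addr0 -lerBlDl subrr. Qed.

Lemma sublinearZ t x : 0 < t -> p (t *: x) = t * p x.
Proof.
move=> t0; apply/le_anti; rewrite p_homo // andbT.
have := @p_homo t^-1 (t *: x); rewrite invr_gt0 => /(_ t0).
by rewrite scalerA mulVf ?gt_eqF // scale1r ler_pdivrMl.
Qed.

Variables (g : V -> R) (S : set V) (e : V).
Hypothesis gD : forall u v, g (u + v) = g u + g v.
Hypothesis gZ : forall t u, g (t *: u) = t * g u.
Hypothesis S0 : S 0.
Hypothesis S_add : forall {u v}, S u -> S v -> S (u + v).
Hypothesis S_scale : forall t {u}, S u -> S (t *: u).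
Hypothesis g_le_p : forall {u}, S u -> g u <= p u.

Lemma sublinear_gap u v : S u -> S v -> g u - p (u - e) <= p (v + e) - g v.
Proof.
move=> Su Sv; have := p_subadd (u - e) (v + e).
rewrite addrACA addNr addr0.
by have := g_le_p (S_add Su Sv); rewrite gD; lra.
Qed.

Lemma hahn_banach_step : exists a, forall w t, S w -> g w + t * a <= p (w + t *: e).
Proof.
pose A := [set g u - p (u - e) | u in S].
have Aub v : S v -> ubound A (p (v + e) - g v) by move=> Sv _ [u Su <-]; exact: sublinear_gap.
have supA : has_sup A.
  by split; [exists (g 0 - p (0 - e)), 0 | exists (p (0 + e) - g 0); exact: Aub].
exists (sup A) => w t Sw.
have [t_lt0|t_gt0|->] := ltgtP t 0; last by rewrite scale0r addr0 mul0r addr0; exact: g_le_p.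
- have s_gt0 : 0 < - t by rewrite oppr_gt0.
  have := sup_upper_bound supA (ex_intro2 _ _ _ (S_scale (- t)^-1 Sw) erefl).
  rewrite -(ler_pM2l s_gt0) mulrBr -gZ -sublinearZ // scalerBr scalerA mulfV ?gt_eqF //.
  by rewrite scale1r scaleNr opprK; lra.
- have := ge_sup supA.1 (Aub _ (S_scale t^-1 Sw)).
  rewrite -(ler_pM2l t_gt0) mulrBr -gZ -sublinearZ // scalerDr scalerA mulfV ?gt_eqF //.
  by rewrite scale1r; lra.
Qed.
End Sublinear.

Section FiniteHahnBanach.
Variables (R : realType) (n : nat).
Implicit Types (l x : 'I_n -> R).

Definition dotv l x := \sum_i l i * x i.

Definition coordv (k : 'I_n) : 'I_n -> R := fun i => (i == k)%:R.

Definition vanishes_from (k : nat) x := forall i : 'I_n, (k <= i)%N -> x i = 0.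

Lemma scalev_apply (a : R) x i : (a *: x) i = a * x i.
Proof. by []. Qed.

Lemma dotvD l x y : dotv l (x + y) = dotv l x + dotv l y.
Proof. by rewrite /dotv -big_split; apply: eq_bigr => i _; rewrite mulrDr. Qed.

Lemma dotvZ l t x : dotv l (t *: x) = t * dotv l x.
Proof. by rewrite /dotv mulr_sumr; apply: eq_bigr => i _; rewrite mulrCA. Qed.

Lemma dotv_coordv l k : dotv l (coordv k) = l k.
Proof.
rewrite /dotv (bigD1 k) //= big1 => [|i /negbTE ik]; rewrite /coordv.
  by rewrite eqxx mulr1 addr0.
by rewrite ik mulr0.
Qed.

Lemma hahn_banach_fin (p : ('I_n -> R) -> R) :
  (forall x y, p (x + y) <= p x + p y) ->
  (forall t x, 0 < t -> t * p x <= p (t *: x)) ->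
  exists l, forall x, dotv l x <= p x.
Proof.
move=> p_subadd p_homo.
suff /(_ n (leqnn n)) [l hl] :
    forall k, (k <= n)%N -> exists l, forall x, vanishes_from k x -> dotv l x <= p x.
  by exists l => x; apply: hl => i; rewrite leqNgt ltn_ord.
elim=> [_|k IH lt_kn].
  exists 0 => x x0; have -> : x = 0 by apply/funext => i; exact: x0.
  by rewrite /dotv big1 ?sublinear_ge0 // => i _; rewrite mul0r.
have [l hl] := IH (ltnW lt_kn); set k' := Ordinal lt_kn.
have [||||a ha] := @hahn_banach_step _ _ p p_subadd p_homo (dotv l) (vanishes_from k)
  (coordv k') (dotvD l) (dotvZ l); [by [] | | | exact: hl |].
- by move=> x y x0 y0 i ki; rewrite !fctE x0 ?y0 ?addr0.
- by move=> t x x0 i ki; rewrite !fctE x0 ?scaler0.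
exists (fun i => if i == k' then a else l i) => x x0.
set w := x - x k' *: coordv k'.
have w0 : vanishes_from k w.
  move=> i ki; rewrite /w addrfctE opprfctE /= scalev_apply /coordv.
  have [->|ik] := eqVneq i k'; first by rewrite mulr1 subrr.
  rewrite mulr0 subr0 x0 // ltn_neqAle ki andbT; apply: contra ik => /eqP ik.
  by apply/eqP/val_inj.
have -> : x = w + x k' *: coordv k' by rewrite subrK.
rewrite dotvD dotvZ dotv_coordv eqxx.
have -> : dotv (fun i => if i == k' then a else l i) w = dotv l w.
  by apply: eq_bigr => i _; case: eqVneq => [->|//]; rewrite w0 ?mulr0.
exact: ha.
Qed.
End FiniteHahnBanach.
Arguments coordv {R n} k.

Section ConeSeparation.
Variables (R : realType) (n : nat) (C : set ('I_n -> R)).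
Hypothesis C0 : C 0.
Hypothesis C_add : forall {x y}, C x -> C y -> C (x + y).
Hypothesis C_scale : forall t {x}, 0 < t -> C x -> C (t *: x).
Hypothesis C_down : forall {x y}, C y -> (forall i, x i <= y i) -> C x.
Hypothesis C_nopos : ~ exists x, C x /\ forall i, 0 < x i.

Let gauge_set x := [set s | C (x - cst s)].
Let gauge x := inf (gauge_set x).

Let gauge_set_neq0 x : gauge_set x !=set0.
Proof.
exists (\sum_i `|x i|); apply: (C_down C0) => i; rewrite !fctE subr_le0.
rewrite (bigD1 i) //=; apply: le_trans (ler_norm _) _.
by rewrite lerDl sumr_ge0.
Qed.

Let gauge_set_lbound x : has_lbound (gauge_set x).
Proof.
exists (- \sum_i `|x i|) => s Cs; rewrite leNgt; apply/negP => hs.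
apply: C_nopos; exists (x - cst s); split => // i; rewrite !fctE subr_gt0.
apply: lt_le_trans hs _; rewrite lerNl (bigD1 i) //= -[X in X <= _]addr0 lerD //.
  by rewrite -normrN ler_norm.
by rewrite sumr_ge0.
Qed.

Let gauge_le x s : C (x - cst s) -> gauge x <= s.
Proof. exact: ge_inf (gauge_set_lbound x) s. Qed.

Let gauge_subadd x y : gauge (x + y) <= gauge x + gauge y.
Proof.
rewrite -lerBlDl; apply: lb_le_inf (gauge_set_neq0 y) _ => r Cr.
suff : gauge (x + y) - r <= gauge x by lra.
apply: lb_le_inf (gauge_set_neq0 x) _ => s Cs.
suff : gauge (x + y) <= r + s by lra.
apply: gauge_le.
have -> : x + y - cst (r + s) = (x - cst s) + (y - cst r).
  by apply/funext => i; rewrite !fctE; ring.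
exact: C_add.
Qed.

Let gauge_homo t x : 0 < t -> t * gauge x <= gauge (t *: x).
Proof.
move=> t_gt0; apply: lb_le_inf (gauge_set_neq0 _) _ => s Cs.
rewrite -ler_pdivlMl // mulrC; apply: gauge_le.
have -> : x - cst (s / t) = t^-1 *: (t *: x - cst s).
  by apply/funext => i; rewrite !(scalev_apply, addrfctE, opprfctE, cstE); field; rewrite gt_eqF.
by apply: C_scale; rewrite ?invr_gt0.
Qed.

Let gauge_le0 x : C x -> gauge x <= 0.
Proof. by move=> Cx; apply: gauge_le; rewrite subr0. Qed.

Lemma cone_separation : exists l : 'I_n -> R,
  [/\ forall i, 0 <= l i, exists i, l i != 0 & forall x, C x -> dotv l x <= 0].
Proof.
have [l l_le] := hahn_banach_fin gauge_subadd gauge_homo.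
have l_le0 x : C x -> dotv l x <= 0 by move=> Cx; exact: le_trans (l_le x) (gauge_le0 Cx).
exists l; split => //.
- move=> i; have : C (- coordv i) by apply: (C_down C0) => j; rewrite !fctE oppr_le0.
  by move/l_le0; rewrite -scaleN1r dotvZ dotv_coordv; lra.
- apply: contrapT => /forallNP l0; have : dotv l (cst (-1)) <= -1.
    by apply: le_trans (l_le _) _; apply: gauge_le; rewrite subrr.
  rewrite /dotv big1 => [|i _]; first lra.
  by have /negP := l0 i; rewrite negbK => /eqP ->; rewrite mul0r.
Qed.
End ConeSeparation.

Lemma ler_ltr_sum (R : numDomainType) (I : finType) (F G : I -> R) (i : I) :
  (forall j, F j <= G j) -> F i < G i -> \sum_j F j < \sum_j G j.
Proof.
move=> FG FGi; rewrite (bigD1 i) //= [ltRHS](bigD1 i) //=.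
by apply: ltr_leD FGi _; exact: ler_sum.
Qed.

Section SignCoherent.
Variables (R : realType) (n : nat).
Implicit Types a b : 'I_n -> R.

Definition sign_coherent a := forall i j, 0 <= a i * a j.

Lemma sign_coherent_ge0 a : sign_coherent a -> 0 <= \sum_i a i -> forall i, 0 <= a i.
Proof.
move=> coh sum_ge0 i; rewrite leNgt; apply/negP => ai_lt0.
have : \sum_(j | j != i) a j <= 0.
  by apply: sumr_le0 => j _; have := coh i j; nra.
by move: sum_ge0; rewrite (bigD1 i) //=; lra.
Qed.

Lemma sign_coherent_le0 a : sign_coherent a -> \sum_i a i <= 0 -> forall i, a i <= 0.
Proof.
move=> coh sum_le0 i; rewrite -oppr_ge0; apply: (@sign_coherent_ge0 (fun j => - a j)).
- by move=> j k; rewrite mulrNN.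
- by rewrite sumrN oppr_ge0.
Qed.

Lemma sign_coherent_mix a b t : 0 <= t <= 1 -> sign_coherent a -> sign_coherent b ->
  \sum_i a i = \sum_i b i -> sign_coherent (fun i => t * a i + (1 - t) * b i).
Proof.
move=> /andP[t_ge0 t_le1] coh_a coh_b sum_ab i j.
have [sum_ge0|sum_le0] := lerP 0 (\sum_i a i).
- have := sign_coherent_ge0 coh_a sum_ge0 i; have := sign_coherent_ge0 coh_a sum_ge0 j.
  rewrite sum_ab in sum_ge0.
  have := sign_coherent_ge0 coh_b sum_ge0 i; have := sign_coherent_ge0 coh_b sum_ge0 j.
  by move=> *; apply: mulr_ge0; nra.
- move/ltW: sum_le0 => sum_le0.
  have := sign_coherent_le0 coh_a sum_le0 i; have := sign_coherent_le0 coh_a sum_le0 j.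
  rewrite sum_ab in sum_le0.
  have := sign_coherent_le0 coh_b sum_le0 i; have := sign_coherent_le0 coh_b sum_le0 j.
  by move=> *; apply: mulr_le0; nra.
Qed.
End SignCoherent.

Lemma continuous_gt_left (R : realType) (V : R -> R) (x z : R) :
  {for x, continuous V} -> z < V x -> exists2 c, 0 < c & z < V (x - c).
Proof.
move=> cV zV; have [e /= e_gt0 He] := (nbhs_ballP _ _).1 (cvgr_gt (V x) cV z zV).
exists (e / 2); first by rewrite divr_gt0.
by apply: He; rewrite /ball /= opprB addrC subrK ger0_norm; lra.
Qed.

Section Allocations.
Context {R : realType} {d : measure_display} {T : measurableType d}.

Lemma inX_comb (Z1 Z2 : T -> R) (a b : R) :
  inX Z1 -> inX Z2 -> inX (fun w => a * Z1 w + b * Z2 w).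
Proof.
move=> [mZ1 [M1 Z1_le]] [mZ2 [M2 Z2_le]]; split.
  by apply: measurable_funD; apply: measurable_funM => //; exact: measurable_cst.
exists (`|a| * M1 + `|b| * M2) => w.
by apply: le_trans (ler_normD _ _) _; rewrite !normrM; apply: lerD; exact: ler_wpM2l.
Qed.

Lemma inX_addr (Z : T -> R) (c : R) : inX Z -> inX (fun w => Z w + c).
Proof.
move=> [mZ [M Z_le]]; split; first by apply: measurable_funD => //; exact: measurable_cst.
by exists (M + `|c|) => w; apply: le_trans (ler_normD _ _) _; exact: lerD.
Qed.

Context {n : nat}.
Implicit Types (E Y : 'I_n -> T -> R).

Definition mix (t : R) (Y1 Y2 : 'I_n -> T -> R) : 'I_n -> T -> R :=
  fun i w => t * Y1 i w + (1 - t) * Y2 i w.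

Lemma mix_allocation E Y1 Y2 t :
  allocation E Y1 -> allocation E Y2 -> allocation E (mix t Y1 Y2).
Proof.
move=> [inY1 sumY1] [inY2 sumY2]; split => [i|w]; first exact: inX_comb.
by rewrite /mix big_split /= -!mulr_sumr sumY1 sumY2; ring.
Qed.

Lemma mix_comon_allocation E Y1 Y2 t : 0 <= t <= 1 ->
  comon_allocation E Y1 -> comon_allocation E Y2 -> comon_allocation E (mix t Y1 Y2).
Proof.
move=> t01 [alY1 coY1] [alY2 coY2]; split; first exact: mix_allocation.
move=> w1 w2 i j.
have inc Y : comonotone Y -> sign_coherent (fun i => Y i w1 - Y i w2) by move=> + i' j'; apply.
have sums : \sum_i (Y1 i w1 - Y1 i w2) = \sum_i (Y2 i w1 - Y2 i w2).
  by rewrite !sumrB !alY1.2 !alY2.2.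
have mix_inc k : mix t Y1 Y2 k w1 - mix t Y1 Y2 k w2 =
    t * (Y1 k w1 - Y1 k w2) + (1 - t) * (Y2 k w1 - Y2 k w2) by rewrite /mix; ring.
by rewrite !mix_inc; exact: (sign_coherent_mix t01 (inc _ coY1) (inc _ coY2) sums).
Qed.

Definition transfer (c : R) (j k : 'I_n) Y : 'I_n -> T -> R :=
  fun i w => Y i w + c * ((i == k)%:R - (i == j)%:R).

Lemma transfer_comon_allocation E Y c j k :
  comon_allocation E Y -> comon_allocation E (transfer c j k Y).
Proof.
move=> [[inY sumY] coY]; split; first split.
- by move=> i; apply: inX_addr.
- have sum_ind m : \sum_i (i == m)%:R = 1 :> R.
    by rewrite (bigD1 m) //= eqxx big1 ?addr0 // => i /negbTE ->.
  move=> w; rewrite /transfer big_split /= sumY -mulr_sumr sumrB !sum_ind.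
  by rewrite subrr mulr0 addr0.
- have shiftB (a b e : R) : a + e - (b + e) = a - b by ring.
  by move=> w1 w2 i i'; rewrite /transfer !shiftB; exact: coY.
Qed.

Lemma transfer_to Y c j k : k != j -> transfer c j k Y k = (fun w => Y k w + c).
Proof. by move=> kj; apply/funext => w; rewrite /transfer eqxx (negbTE kj) subr0 mulr1. Qed.

Lemma transfer_from Y c j k : k != j -> transfer c j k Y j = (fun w => Y j w + - c).
Proof.
by move=> kj; apply/funext => w; rewrite /transfer eqxx eq_sym (negbTE kj) sub0r mulrN1.
Qed.

Lemma transfer_other Y c j k i : i != j -> i != k -> transfer c j k Y i = Y i.
Proof.
by move=> ij ik; apply/funext => w; rewrite /transfer (negbTE ij) (negbTE ik) subrr mulr0 addr0.
Qed.
End Allocations.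

Section Welfare.
Context {R : realType} {d : measure_display} {T : measurableType d} {n : nat}.
Variables (E : 'I_n -> T -> R) (U : 'I_n -> (T -> R) -> R).
Implicit Types (Y : 'I_n -> T -> R) (lam : 'I_n -> R).

Section Concave.
Hypothesis U_concave : forall i, concaveU (U i).

Lemma mix_utility Y1 Y2 t i : 0 <= t <= 1 -> allocation E Y1 -> allocation E Y2 ->
  t * U i (Y1 i) + (1 - t) * U i (Y2 i) <= U i (mix t Y1 Y2 i).
Proof. by move=> t01 [inY1 _] [inY2 _]; exact: U_concave. Qed.

Lemma mix_indiv_rational Y1 Y2 t : 0 <= t <= 1 ->
  indiv_rational U E Y1 -> indiv_rational U E Y2 -> indiv_rational U E (mix t Y1 Y2).
Proof.
move=> t01 [alY1 irY1] [alY2 irY2]; split => [|i]; first exact: mix_allocation.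
apply: le_trans (mix_utility i t01 alY1 alY2); move/andP: t01 => [t_ge0 t_le1].
by have := irY1 i; have := irY2 i; nra.
Qed.

Variable Y : 'I_n -> T -> R.

Definition improvements : set ('I_n -> R) :=
  [set z | exists2 t, 0 < t & exists Y', [/\ indiv_rational U E Y', comon_allocation E Y' &
     forall i, z i <= t * (U i (Y' i) - U i (Y i))]].

Lemma improvements0 : indiv_rational U E Y -> comon_allocation E Y -> improvements 0.
Proof. by move=> irY coY; exists 1 => //; exists Y; split => // i; rewrite subrr mulr0. Qed.

Lemma improvements_add z1 z2 :
  improvements z1 -> improvements z2 -> improvements (z1 + z2).
Proof.
move=> [t1 t1_gt0 [Y1 [ir1 co1 le1]]] [t2 t2_gt0 [Y2 [ir2 co2 le2]]].
have s_gt0 : 0 < t1 + t2 by rewrite addr_gt0.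
set th := t1 / (t1 + t2).
have th01 : 0 <= th <= 1.
  apply/andP; split; first by apply: divr_ge0; exact: ltW.
  by rewrite ler_pdivrMr // mul1r lerDl ltW.
exists (t1 + t2) => //; exists (mix th Y1 Y2); split => [||i].
- exact: mix_indiv_rational.
- exact: mix_comon_allocation.
have gain : (t1 + t2) * (th * U i (Y1 i) + (1 - th) * U i (Y2 i) - U i (Y i)) =
    t1 * (U i (Y1 i) - U i (Y i)) + t2 * (U i (Y2 i) - U i (Y i)).
  by rewrite /th; field; rewrite gt_eqF.
have := ler_wpM2l (ltW s_gt0) (lerB (mix_utility i th01 ir1.1 ir2.1) (lexx (U i (Y i)))).
by rewrite gain fctE; have := le1 i; have := le2 i; lra.
Qed.

Lemma improvementsZ t z : 0 < t -> improvements z -> improvements (t *: z).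
Proof.
move=> t_gt0 [s s_gt0 [Y' [irY' coY' le]]]; exists (t * s); first exact: mulr_gt0.
by exists Y'; split => // i; rewrite scalev_apply -mulrA ler_pM2l.
Qed.

Lemma improvements_down z z' : improvements z' -> (forall i, z i <= z' i) -> improvements z.
Proof.
move=> [t t_gt0 [Y' [irY' coY' le]]] z_le; exists t => //.
by exists Y'; split => // i; exact: le_trans (z_le i) (le i).
Qed.

Lemma CPO_improvements_nopos (i0 : 'I_n) :
  CPO U E Y -> ~ exists z, improvements z /\ forall i, 0 < z i.
Proof.
move=> [_ _ noY] [z [[t t_gt0 [Y' [irY' coY' le]]] z_gt0]]; apply: noY.
have gain i : U i (Y i) < U i (Y' i).
  by rewrite -subr_gt0 -(pmulr_rgt0 _ t_gt0); exact: lt_le_trans (z_gt0 i) (le i).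
by exists Y'; split => [| |i|]; [| | exact: ltW | exists i0].
Qed.

Lemma CPO_CS (i0 : 'I_n) : CPO U E Y -> exists lam, in_Lambda lam /\ CS U E lam Y.
Proof.
move=> cpoY; case: (cpoY) => coY irY _.
have [lam [lam_ge0 lam_neq0 lam_le0]] := cone_separation (improvements0 irY coY)
  improvements_add improvementsZ improvements_down (CPO_improvements_nopos i0 cpoY).
exists lam; split => //; split => // Y' irY' coY'.
have : improvements (fun i => U i (Y' i) - U i (Y i)).
  by exists 1 => //; exists Y'; split => // i; rewrite mul1r.
move/lam_le0; rewrite /dotv; under eq_bigr do rewrite mulrBr.
by rewrite sumrB subr_le0.
Qed.
End Concave.

Section CashRegular.
Hypothesis U_cash : forall i, cash_regular (U i).

Let addr0_fun (Z : T -> R) : (fun w => Z w + 0) = Z.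
Proof. by apply/funext => w; rewrite addr0. Qed.

Lemma transfer_improves Y j k : k != j ->
  indiv_rational U E Y -> comon_allocation E Y -> U j (E j) < U j (Y j) ->
  exists Y', [/\ indiv_rational U E Y', comon_allocation E Y',
    forall i, i != j -> U i (Y i) <= U i (Y' i) & U k (Y k) < U k (Y' k)].
Proof.
move=> kj [alY irY] coY slack.
have [cont_j _ _] := U_cash j (alY.1 j).
have := @continuous_gt_left _ _ 0 (U j (E j)) (cont_j 0).
rewrite /= addr0_fun => /(_ slack) [c c_gt0]; rewrite sub0r => still_ir.
have [_ incr_k _] := U_cash k (alY.1 k).
have gain_k : U k (Y k) < U k (transfer c j k Y k).
  by rewrite transfer_to // -[X in U k X < _]addr0_fun; exact: incr_k.
exists (transfer c j k Y); split => //.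
- split => [|i]; first exact: (transfer_comon_allocation c j k coY).1.
  have [->|ij] := eqVneq i j; first by rewrite transfer_from //; exact: ltW.
  have [->|ik] := eqVneq i k; first exact: le_trans (irY k) (ltW gain_k).
  by rewrite transfer_other.
- exact: transfer_comon_allocation.
- move=> i ij; have [->|ik] := eqVneq i k; first exact: ltW.
  by rewrite transfer_other.
Qed.

Lemma CS_CPO lam Y : in_Lambda lam -> CS U E lam Y -> CPO U E Y.
Proof.
move=> [lam_ge0 [k lam_k]] [irY coY Ymax]; split => // -[Y' [irY' coY' Y'_ge [j Y'_gt]]].
suff [Y'' [irY'' coY'' ge [i gt]]] : exists Y'', [/\ indiv_rational U E Y'',
    comon_allocation E Y'', forall i, lam i * U i (Y i) <= lam i * U i (Y'' i) &
    exists i, lam i * U i (Y i) < lam i * U i (Y'' i)].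
  by have := Ymax _ irY'' coY''; rewrite leNgt (ler_ltr_sum ge gt).
have lam_gt0 i : lam i != 0 -> 0 < lam i by rewrite lt_def => ->; exact: lam_ge0.
have [lam_j0|lam_j] := eqVneq (lam j) 0; last first.
  exists Y'; split => //; first by move=> i; apply: ler_wpM2l; [exact: lam_ge0 | exact: Y'_ge].
  by exists j; rewrite ltr_pM2l ?lam_gt0.
have kj : k != j by apply: contraNneq lam_k => ->; apply/eqP.
have [Y'' [irY'' coY'' ge gt]] := transfer_improves kj irY' coY' (le_lt_trans (irY.2 j) Y'_gt).
exists Y''; split => //.
  move=> i; have [->|ij] := eqVneq i j; first by rewrite lam_j0 !mul0r.
  by apply: ler_wpM2l; [exact: lam_ge0 | exact: le_trans (Y'_ge i) (ge i ij)].
by exists k; rewrite ltr_pM2l ?lam_gt0 //; exact: le_lt_trans (Y'_ge k) gt.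
Qed.
End CashRegular.
End Welfare.

Theorem mainTheorem3 (R : realType) (d : measure_display) (T : measurableType d)
  (P : probability T R) (n : nat) (E : 'I_n -> T -> R)
  (U : 'I_n -> (T -> R) -> R) :
  atomless P -> (2 <= n)%N ->
  (forall i, inX (E i)) ->
  (forall i, cash_regular (U i)) ->
  (forall i, monotoneU (U i)) ->
  (forall i, concaveU (U i)) ->
  forall Y : 'I_n -> T -> R,
    CPO U E Y <-> exists lam : 'I_n -> R, in_Lambda lam /\ CS U E lam Y.
Proof.
move=> _ n_ge2 _ U_cash _ U_concave Y; split.
- exact: (CPO_CS U_concave (Ordinal (ltnW n_ge2))).
- by move=> [lam [lam_in CS_Y]]; exact: (CS_CPO U_cash lam_in CS_Y).
Qed.
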